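(* Let $G$ be a complete tiered graph on vertex set $[n]$. For each spanning tree $T$ of $G$ let $\mathrm{act}(T)$ be the set of externally active edges of $G$ with respect to $T$ (for the lexicographic order on edges) and let $T_{\mathrm{act}}$ be the edge set $E(T)\cup\mathrm{act}(T)$. Then the elements $$Z_{G\setminus T_{\mathrm{act}}}=\prod_{e\in E(G)\setminus T_{\mathrm{act}}} z_e,\qquad T\in ST(G),$$ span the space $\mathcal S_G$.
   Context: A complete tiered graph on $[n]$ with surjective tiering $\mathbf t:[n]\to[m]$ has edge set exactly $\{\{i,j\}: i<j,\ \mathbf t(i)<\mathbf t(j)\}$. An edge $e\notin T$ is externally active with respect to the spanning tree $T$ if it is the minimal edge (in the lexicographic order on edges, edges written as $(i,j)$ with $i<j$) of the unique cycle in $T\cup\{e\}$. A subset $H\subseteq E(G)$ is slim if the graph $(V(G),E(G)\setminus H)$ is connected. For an edge $e=\{i,j\}$ with $i<j$ set $z_e=z_i-z_j\in\mathbb K[z_1,\dots,z_n]$ ($\mathbb K$ a field of characteristic $0$), and for $H\subseteq E(G)$ set $Z_H=\prod_{e\in H}z_e$. $\mathcal S_G$ is the linear subspace of $\mathbb K[z_1,\dots,z_n]$ spanned by the $Z_H$ for all slim $H\subseteq E(G)$. *)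

From HB Require Import structures.
From mathcomp Require Import all_boot all_order all_algebra.
From mathcomp Require Import mpoly.
From Stdlib Require Import ClassicalEpsilon.
Set Implicit Arguments. Unset Strict Implicit. Unset Printing Implicit Defensive.
Import GRing.Theory.
Local Open Scope ring_scope.

(* Vertices of [n] are 'I_n (0-based); tiers [m] are 'I_m.
   An edge {i,j} with i<j is stored as the ordered pair (i,j). *)
Definition edge n := ('I_n * 'I_n)%type.

Definition tiered_edges n m (t : 'I_n -> 'I_m) : {set edge n} :=
  [set p : edge n | (p.1 < p.2)%N && (t p.1 < t p.2)%N].

Definition adj n (F : {set edge n}) : rel 'I_n :=
  fun u v => ((u, v) \in F) || ((v, u) \in F).

Definition connected_on n (F : {set edge n}) : Prop :=
  forall u v : 'I_n, connect (adj F) u v.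

Definition is_cycle n (F : {set edge n}) (c : seq 'I_n) : bool :=
  (3 <= size c)%N && ucycleb (adj F) c.

Definition acyclic n (F : {set edge n}) : Prop :=
  forall c : seq 'I_n, ~~ is_cycle F c.

Definition spanning_tree n (E T : {set edge n}) : Prop :=
  T \subset E /\ connected_on T /\ acyclic T.

Definition edge_of n (x y : 'I_n) : edge n :=
  if (x < y)%N then (x, y) else (y, x).

Definition lex_le n (e f : edge n) : bool :=
  (e.1 < f.1)%N || ((e.1 == f.1) && (e.2 <= f.2)%N).

(* e is externally active w.r.t. T: e is an edge of G not in T and it is
   the lex-minimal edge of the (unique) cycle of T ∪ {e}. *)
Definition ext_active n (E T : {set edge n}) (e : edge n) : Prop :=
  [/\ e \in E, e \notin T &
    exists c : seq 'I_n, is_cycle (e |: T) c /\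
      forall x, x \in c -> lex_le e (edge_of x (next c x))].

Definition asb (P : Prop) : bool :=
  if excluded_middle_informative P then true else false.

Definition act n (E T : {set edge n}) : {set edge n} :=
  [set e | asb (ext_active E T e) ].

Definition T_act n (E T : {set edge n}) : {set edge n} := T :|: act E T.

Definition slim n (E H : {set edge n}) : Prop :=
  H \subset E /\ connected_on (E :\: H).

Definition z_e (K : fieldType) n (e : edge n) : {mpoly K[n]} :=
  'X_e.1 - 'X_e.2.

Definition Z_ (K : fieldType) n (H : {set edge n}) : {mpoly K[n]} :=
  \prod_(e in H) z_e K e.

Definition in_span (K : fieldType) (V : lmodType K) (I : finType)
  (P : I -> Prop) (f : I -> V) (v : V) : Prop :=
  exists c : I -> K, (forall i, ~ P i -> c i = 0) /\ v = \sum_i c i *: f i.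

From HB Require Import structures.
From mathcomp Require Import all_boot all_order all_algebra.
From mathcomp Require Import mpoly.
From mathcomp Require Import zify.
From Stdlib Require Import ClassicalEpsilon.
Import GRing.Theory.
Local Open Scope ring_scope.
Set Implicit Arguments. Unset Strict Implicit. Unset Printing Implicit Defensive.

(* The Z_{E \ T_act} are Z_H for the slim sets H = E \ T_act, which gives one
   inclusion.  For the other, write a slim H as E \ F with F connected.  Inside F
   take a spanning tree T of maximal weight, for the injective weight refining
   the lexicographic order: every edge of F outside T is then lighter than all
   the other edges of its fundamental cycle, i.e. externally active, so that
   F is contained in T_act.  If F <> T_act, pick an active edge f outside F,
   with fundamental cycle c.  Since the differences z_i - z_{next i} along c sum
   to zero, z_f is a signed sum of the z_g, g in c \ f, and
   Z_{E \ F} = z_f Z_{E \ (F + f)} becomes a combination of the Z_{E \ (F + f - g)}.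
   Each F + f - g is again connected and, as f is the lex-minimal edge of c,
   strictly lighter than F: induction on the weight of F concludes. *)

Definition oriented n (F : {set edge n}) := {in F, forall p : edge n, (p.1 < p.2)%N}.

Section Adjacency.
Variable n : nat.
Implicit Types (F : {set edge n}) (u v : 'I_n).

Lemma orientedU1 F (e : edge n) : oriented F -> (e.1 < e.2)%N -> oriented (e |: F).
Proof. by move=> oF lt_e p; rewrite !inE => /orP[/eqP ->|/oF]. Qed.

Lemma oriented_sub F F' : F \subset F' -> oriented F' -> oriented F.
Proof. by move=> /subsetP sFF' oF' p /sFF'/oF'. Qed.

Lemma adj_edge_of F u v : oriented F -> adj F u v -> edge_of u v \in F.
Proof.
move=> oF; rewrite /adj /edge_of => /orP[]uvF; have /= lt_uv := oF _ uvF.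
  by rewrite lt_uv.
by rewrite ltnNge (ltnW lt_uv).
Qed.

Lemma edge_of_adj F u v : edge_of u v \in F -> adj F u v.
Proof. by rewrite /adj /edge_of; case: ifP => _ ->; rewrite ?orbT. Qed.

Lemma adj_sym F : ssrbool.symmetric (adj F).
Proof. by move=> u v; rewrite /adj orbC. Qed.

Lemma adj_subset F F' u v : F \subset F' -> adj F u v -> adj F' u v.
Proof. by move=> /subsetP sFF'; rewrite /adj => /orP[/sFF'|/sFF'] ->; rewrite ?orbT. Qed.

Lemma edge_of_eq u v u' v' : edge_of u v = edge_of u' v' ->
  (u = u' /\ v = v') \/ (u = v' /\ v = u').
Proof. by rewrite /edge_of; case: ifP; case: ifP => _ _ [-> ->]; auto. Qed.

Lemma connected_on_sub F F' : connected_on F ->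
  (forall u v, adj F u v -> connect (adj F') u v) -> connected_on F'.
Proof. by move=> cF sFF' u v; apply: (connect_sub sFF' (cF u v)). Qed.

End Adjacency.

Lemma next_next_neq (T : eqType) (c : seq T) x :
  uniq c -> (2 < size c)%N -> x \in c -> next c (next c x) != x.
Proof.
move=> Uc Sc xc; case: (rot_to xc) => i s Hr.
have Ur : uniq (x :: s) by rewrite -Hr rot_uniq.
have Sr : (2 < size (x :: s))%N by rewrite -Hr size_rot.
rewrite -!(next_rot i Uc) Hr.
case: s Hr Ur Sr => [|a [|b r]] //= _.
rewrite !inE !negb_or => /andP[/andP[xa /andP[xb _]] /andP[/andP[ab _] _]] _.
by rewrite eqxx /= (eq_sym a x) (negbTE xa) eqxx eq_sym.
Qed.

Lemma path_sub_source (T : eqType) (e e' : rel T) (P : pred T) x s :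
  (forall y z, P y -> e y z -> e' y z) ->
  all P (belast x s) -> path e x s -> path e' x s.
Proof.
move=> ee'; elim: s x => //= y s IHs x /andP[Px Ps] /andP[exy es].
by rewrite (ee' _ _ Px exy) IHs.
Qed.

Section CycleEdges.
Variable n : nat.
Implicit Types (F : {set edge n}) (c : seq 'I_n) (x y : 'I_n).

Definition cycle_edge c x := edge_of x (next c x).

Lemma cycle_edge_inj c x y : uniq c -> (2 < size c)%N -> x \in c -> y \in c ->
  cycle_edge c x = cycle_edge c y -> x = y.
Proof.
move=> Uc Sc xc yc /edge_of_eq [[]//|[ex ey]].
by have := next_next_neq Uc Sc yc; rewrite -ex ey eqxx.
Qed.

Lemma cycle_edge_in F c x :
  oriented F -> cycle (adj F) c -> x \in c -> cycle_edge c x \in F.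
Proof. by move=> oF cc xc; apply: adj_edge_of => //; apply: next_cycle cc xc. Qed.

(* Going the long way round the cycle avoids its edge at [x]. *)
Lemma connect_around_cycle F c x : uniq c -> x \in c ->
  (forall y, y \in c -> y != x -> cycle_edge c y \in F) ->
  connect (adj F) (next c x) x.
Proof.
move=> Uc xc cF; case: (rot_to xc) => i s Hr.
have Ur : uniq (x :: s) by rewrite -Hr rot_uniq.
have nextE : next c =1 next (x :: s) by move=> z; rewrite -Hr next_rot.
have memE z : (z \in x :: s) = (z \in c) by rewrite -Hr mem_rot.
case: s Hr Ur nextE memE => [|a s] Hr Ur nextE memE.
  by rewrite nextE /= eqxx connect0.
rewrite nextE /= eqxx.
have /andP[_ path_a] := cycle_next Ur.
apply/connectP; exists (rcons s x); last by rewrite last_rcons.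
apply: (path_sub_source (P := fun y => (y != x) && (y \in c))) path_a.
  move=> y z /andP[yx yc] /eqP <-; rewrite -nextE.
  by apply: edge_of_adj; apply: cF.
rewrite belast_rcons; apply/allP => y ys; apply/andP; split.
  by apply: contraTneq ys => ->; move: Ur => /= /andP[].
by rewrite -memE inE ys orbT.
Qed.

Lemma connected_exchange F F' c x :
  oriented F -> connected_on F -> uniq c -> x \in c ->
  (forall y, y \in c -> y != x -> cycle_edge c y \in F') ->
  (forall e, e \in F -> e != cycle_edge c x -> e \in F') -> connected_on F'.
Proof.
move=> oF cF Uc xc cF' FF'; apply: (connected_on_sub cF) => u v /(adj_edge_of oF) uvF.
have around := connect_around_cycle Uc xc cF'.
have [|ne] := eqVneq (edge_of u v) (cycle_edge c x).
  by case/edge_of_eq => [][-> ->] //; rewrite (sym_connect_sym (@adj_sym _ F')).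
by apply: connect1; apply: edge_of_adj; apply: FF'.
Qed.

Lemma exists_cycle_setU1 F (a b : 'I_n) :
  oriented F -> connected_on F -> (a < b)%N -> (a, b) \notin F ->
  exists c, is_cycle ((a, b) |: F) c.
Proof.
move=> oF cF lt_ab abF; have [p ab_p] := connectP (cF a b).
case: (shortenP ab_p) => p' ab_p' Up' _ b_last.
exists (a :: p'); apply/and3P; split=> //; last first.
  rewrite /= rcons_path -b_last; apply/andP; split.
    by apply: sub_path ab_p' => u v; apply: adj_subset; apply: subsetUr.
  by rewrite /adj !inE eqxx orbT.
case: p' ab_p' Up' b_last => [|v1 [|v2 q]] //=.
  by move=> _ _ ba; move: lt_ab; rewrite ba ltnn.
move=> /andP[av _] _ ba; have := adj_edge_of oF av.
by rewrite -ba /edge_of lt_ab (negbTE abF).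
Qed.

End CycleEdges.

Section Weights.
Variable n : nat.
Implicit Types (e f : edge n) (F : {set edge n}).

(* An injective weight that refines the lexicographic order. *)
Definition edge_weight e : nat := (e.1 * n + e.2)%N.

Definition weight F : nat := (\sum_(e in F) edge_weight e)%N.

Lemma edge_weight_fst e f : (e.1 < f.1)%N -> (edge_weight e < edge_weight f)%N.
Proof.
rewrite /edge_weight => lt1; have := leq_mul lt1 (leqnn n).
by have := ltn_ord e.2; have := ltn_ord f.2; lia.
Qed.

Lemma edge_weight_inj : injective edge_weight.
Proof.
move=> [a b] [a' b'] eqw; case: (ltngtP a a') => [lt|lt|eqa].
- by have := edge_weight_fst (e := (a, b)) (f := (a', b')) lt; rewrite eqw ltnn.
- by have := edge_weight_fst (e := (a', b')) (f := (a, b)) lt; rewrite eqw ltnn.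
have eqb : (b : nat) = b' by move: eqw; rewrite /edge_weight /= eqa; lia.
by congr pair; apply: val_inj.
Qed.

Lemma lex_le_weight e f : lex_le e f -> (edge_weight e <= edge_weight f)%N.
Proof.
rewrite /lex_le => /orP[lt|/andP[/eqP eq1 le2]]; first exact/ltnW/edge_weight_fst.
by rewrite /edge_weight eq1; lia.
Qed.

Lemma lex_lt_weight e f : lex_le e f -> e != f -> (edge_weight e < edge_weight f)%N.
Proof.
move=> /lex_le_weight; rewrite leq_eqVlt => /orP[/eqP/edge_weight_inj ->|//].
by rewrite eqxx.
Qed.

Lemma lex_gt_weight e f : ~~ lex_le e f -> (edge_weight f < edge_weight e)%N.
Proof.
rewrite /lex_le negb_or negb_and -leqNgt => /andP[].
rewrite leq_eqVlt => /orP[/eqP eq1|lt1]; last by move=> _; apply: edge_weight_fst.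
rewrite (val_inj eq1) eqxx /= -ltnNge => lt2.
by rewrite /edge_weight -eq1; lia.
Qed.

Lemma weight_le_setT F : (weight F <= weight [set: edge n])%N.
Proof. by rewrite /weight [X in (_ <= X)%N](big_setID F) /= setTI leq_addr. Qed.

Lemma weightD1 F e : e \in F -> weight F = (edge_weight e + weight (F :\ e))%N.
Proof. by move=> eF; rewrite /weight (big_setD1 _ eF). Qed.

Lemma weightU1 F e : e \notin F -> weight (e |: F) = (edge_weight e + weight F)%N.
Proof. by move=> eF; rewrite /weight (big_setU1 _ eF). Qed.

End Weights.

Lemma in_actP n (E T : {set edge n}) e : e \in act E T <-> ext_active E T e.
Proof. by rewrite inE /asb; case: excluded_middle_informative. Qed.

(* Lexicographic order: fewer edges first, then larger weight. *)
Definition subtree_cost n (T : {set edge n}) : nat :=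
  (#|T| * (weight [set: edge n]).+1 + (weight [set: edge n] - weight T))%N.

Section MinCostSubgraph.
Variables (n : nat) (E F T : {set edge n}).
Hypotheses (oE : oriented E) (FE : F \subset E) (TF : T \subset F).
Hypothesis cT : connected_on T.
Hypothesis T_min : forall T' : {set edge n},
  T' \subset F -> connected_on T' -> (subtree_cost T <= subtree_cost T')%N.

Let oT : oriented T := oriented_sub (subset_trans TF FE) oE.

Lemma min_cost_acyclic : acyclic T.
Proof.
move=> c; apply/negP => /andP[Sc /andP[cyc Uc]].
have [x xc] : exists x, x \in c.
  by case: c Sc {cyc Uc} => // x c _; exists x; apply: mem_head.
have gT := cycle_edge_in oT cyc xc.
have cT' : connected_on (T :\ cycle_edge c x).
  apply: (connected_exchange oT cT Uc xc).
    move=> y yc yx; rewrite !inE (cycle_edge_in oT cyc yc) andbT.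
    by apply: contra yx => /eqP/(cycle_edge_inj Uc Sc yc xc) ->.
  by move=> e eT ne; rewrite !inE ne eT.
have := T_min (subset_trans (subD1set _ _) TF) cT'.
rewrite /subtree_cost (cardsD1 (cycle_edge c x) T) gT /= mulnDl mul1n.
rewrite addnAC [X in (_ <= X)%N]addnC leq_add2r.
by move=> /(leq_trans (leq_addr _ _)); rewrite ltnNge leq_subr.
Qed.

(* Exchanging a lex-smaller cycle edge for [(a, b)] would keep the size and
   increase the weight. *)
Lemma min_cost_T_act : F \subset T_act E T.
Proof.
apply/subsetP => -[a b] abF; rewrite /T_act inE; case abT: ((a, b) \in T) => //=.
have abE := subsetP FE _ abF; have /= lt_ab := oE abE.
have oabT : oriented ((a, b) |: T) by apply: orientedU1.
have [c c_cycle] := exists_cycle_setU1 oT cT lt_ab (negbT abT).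
have /andP[Sc /andP[cyc Uc]] := c_cycle.
apply/in_actP; split => //; first by rewrite abT.
exists c; split => // x xc; rewrite -/(cycle_edge c x); set g := cycle_edge c x.
apply/negPn/negP => lt_g.
have gT : g \in T.
  have := cycle_edge_in oabT cyc xc; rewrite !inE => /orP[/eqP gab|//].
  by move: lt_g; rewrite /g gab /lex_le !eqxx leqnn orbT.
pose T' := (a, b) |: (T :\ g).
have cT' : connected_on T'.
  apply: (connected_exchange oT cT Uc xc).
    move=> y yc yx; have := cycle_edge_in oabT cyc yc; rewrite !inE.
    case/orP => [->//|->]; rewrite andbT orbC; apply/orP; left.
    by apply: contra yx => /eqP/(cycle_edge_inj Uc Sc yc xc) ->.
  by move=> e eT ne; rewrite !inE ne eT orbT.
have T'F : T' \subset F.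
  by apply/subsetP => q; rewrite !inE => /orP[/eqP ->|/andP[_ /(subsetP TF)]].
have abT' : (a, b) \notin T :\ g by rewrite !inE abT andbF.
have le_B := weight_le_setT T'; rewrite /T' weightU1 // in le_B.
have := T_min T'F cT'.
rewrite /subtree_cost /T' cardsU1 abT' (cardsD1 g T) gT weightU1 // (weightD1 gT).
by rewrite leq_add2l leq_sub2lE // leq_add2r leqNgt lex_gt_weight.
Qed.

End MinCostSubgraph.

Lemma exists_spanning_tree_T_act n (E F : {set edge n}) :
  oriented E -> F \subset E -> connected_on F ->
  exists T : {set edge n}, [/\ T \subset F, spanning_tree E T & F \subset T_act E T].
Proof.
move=> oE FE cF.
pose conb (T : {set edge n}) := [forall u, [forall v, connect (adj T) u v]].
have conbP T : reflect (connected_on T) (conb T).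
  apply: (iffP forallP) => [cT u v|cT u]; first by have /forallP := cT u; apply.
  by apply/forallP => v.
pose P (T : {set edge n}) := (T \subset F) && conb T.
have PF : P F by rewrite /P subxx; apply/conbP.
case: (arg_minnP (@subtree_cost n) PF) => T /andP[TF /conbP cT] T_min.
have T_min' (T' : {set edge n}) :
    T' \subset F -> connected_on T' -> (subtree_cost T <= subtree_cost T')%N.
  by move=> T'F /conbP cT'; apply: T_min; rewrite /P T'F.
exists T; split => //; last exact: (min_cost_T_act oE FE TF cT T_min').
split; [exact: subset_trans TF FE | split=> //].
exact: (min_cost_acyclic oE FE TF cT T_min').
Qed.

Section Span.
Variables (K : fieldType) (V : lmodType K) (I : finType) (P : I -> Prop) (f : I -> V).

Lemma in_span0 : in_span P f 0.
Proof. by exists (fun=> 0); split=> //; rewrite big1 // => i _; rewrite scale0r. Qed.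

Lemma in_spanD u v : in_span P f u -> in_span P f v -> in_span P f (u + v).
Proof.
move=> [a [Pa ->]] [b [Pb ->]]; exists (fun i => a i + b i); split.
  by move=> i Pi; rewrite Pa ?Pb ?addr0.
by rewrite -big_split /=; apply: eq_bigr => i _; rewrite scalerDl.
Qed.

Lemma in_spanZ k u : in_span P f u -> in_span P f (k *: u).
Proof.
move=> [a [Pa ->]]; exists (fun i => k * a i); split.
  by move=> i Pi; rewrite Pa ?mulr0.
by rewrite scaler_sumr; apply: eq_bigr => i _; rewrite scalerA.
Qed.

Lemma in_span_gen i : P i -> in_span P f (f i).
Proof.
move=> Pi; exists (fun j => if j == i then 1 else 0); split.
  by move=> j Pj; case: eqP => // ji; case: Pj; rewrite ji.
rewrite (bigD1 i) //= eqxx scale1r big1 ?addr0 // => j /negbTE ->.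
by rewrite scale0r.
Qed.

Lemma in_span_sum (X : eqType) (s : seq X) (Q : pred X) (F : X -> V) :
  (forall x, x \in s -> Q x -> in_span P f (F x)) ->
  in_span P f (\sum_(x <- s | Q x) F x).
Proof.
move=> sF; rewrite big_seq_cond; apply: big_ind => //.
- exact: in_span0.
- exact: in_spanD.
by move=> x /andP[]; apply: sF.
Qed.

End Span.

Lemma in_span_trans (K : fieldType) (V : lmodType K) (I J : finType)
  (P : I -> Prop) (f : I -> V) (Q : J -> Prop) (g : J -> V) v :
  (forall i, P i -> in_span Q g (f i)) -> in_span P f v -> in_span Q g v.
Proof.
move=> Pf [a [Pa ->]]; apply: in_span_sum => i _ _.
case: (excluded_middle_informative (P i)) => [Pi|nPi].
  by apply: in_spanZ; apply: Pf.
by rewrite Pa // scale0r; apply: in_span0.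
Qed.

Section CycleRelation.
Variables (K : fieldType) (n : nat).
Implicit Types (c : seq 'I_n) (x : 'I_n) (H : {set edge n}).

Lemma sum_X_sub_next c : uniq c ->
  \sum_(x <- c) ('X_x - 'X_(next c x) : {mpoly K[n]}) = 0.
Proof.
move=> Uc; rewrite sumrB -(big_map (next c) xpredT (fun y => 'X_y)).
have next_inj : injective (next c) by apply: can_inj (prev_next Uc).
have next_perm : perm_eq (map (next c) c) c.
  apply: uniq_perm; rewrite ?map_inj_uniq //.
  by move=> y; rewrite -{1}(next_prev Uc y) mem_map // mem_prev.
by rewrite (perm_big _ next_perm) subrr.
Qed.

Definition cycle_sign c x : K := if (x < next c x)%N then 1 else -1.

Lemma X_sub_next c x :
  ('X_x - 'X_(next c x) : {mpoly K[n]}) = cycle_sign c x *: z_e K (cycle_edge c x).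
Proof.
rewrite /cycle_sign /cycle_edge /edge_of /z_e.
by case: ifP => _ /=; rewrite ?scale1r // scaleN1r opprB.
Qed.

Lemma cycle_sign_sqr c x : cycle_sign c x * cycle_sign c x = 1.
Proof. by rewrite /cycle_sign; case: ifP; rewrite ?mulr1 ?mulrNN ?mulr1. Qed.

Lemma Z_cycle_exchange c x0 H :
  uniq c -> x0 \in c -> cycle_edge c x0 \in H ->
  Z_ K H = \sum_(x <- c | x != x0) (- (cycle_sign c x0 * cycle_sign c x)) *:
             (z_e K (cycle_edge c x) * Z_ K (H :\ cycle_edge c x0)).
Proof.
move=> Uc x0c gH; rewrite /Z_ (big_setD1 _ gH) /=.
have z_x0 : z_e K (cycle_edge c x0) = cycle_sign c x0 *: ('X_x0 - 'X_(next c x0)).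
  by rewrite X_sub_next scalerA cycle_sign_sqr scale1r.
have := sum_X_sub_next Uc; rewrite (bigD1_seq _ x0c Uc) /= => /eqP.
rewrite addr_eq0 => /eqP X_x0.
rewrite z_x0 X_x0 scalerN scaler_sumr -sumrN mulr_suml.
by apply: eq_bigr => x _; rewrite X_sub_next scalerA scaleNr scalerAl mulNr.
Qed.

End CycleRelation.

Lemma active_edge_cycle n (E T : {set edge n}) f :
  oriented E -> spanning_tree E T -> f \in act E T ->
  exists c x0, [/\ is_cycle (f |: T) c, x0 \in c, cycle_edge c x0 = f,
    {in c, forall x, x != x0 -> cycle_edge c x \in T} &
    {in c, forall x, lex_le f (cycle_edge c x)}].
Proof.
move=> oE [TE [_ acT]] /in_actP[fE _ [c [c_cycle lex_c]]].
have /andP[Sc /andP[cyc Uc]] := c_cycle.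
have ofT := orientedU1 (oriented_sub TE oE) (oE _ fE).
have [x0 x0c gx0] : exists2 x0, x0 \in c & cycle_edge c x0 = f.
  have [/existsP[x /andP[xc /eqP gx]]|no_f] :=
    boolP [exists x : 'I_n, (x \in c) && (cycle_edge c x == f)]; first by exists x.
  have /negP[] := acT c; rewrite /is_cycle Sc /ucycleb Uc andbT /=.
  apply: cycle_from_next => // x xc; apply: edge_of_adj.
  have := cycle_edge_in ofT cyc xc; rewrite !inE => /orP[/eqP gf|//].
  by move: no_f; rewrite negb_exists => /forallP/(_ x); rewrite xc gf eqxx.
exists c, x0; split => // x xc xx0.
have := cycle_edge_in ofT cyc xc; rewrite !inE => /orP[/eqP gf|//].
by case/eqP: xx0; apply: cycle_edge_inj Uc Sc xc x0c _; rewrite gf gx0.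
Qed.

(* Replacing [F] by [F + f - g] for the edges [g <> f] of the fundamental cycle
   of the active edge [f]. *)
Lemma Z_compl_exchange (K : fieldType) n (E F T : {set edge n}) f :
  oriented E -> F \subset E -> connected_on F ->
  T \subset F -> spanning_tree E T -> f \in act E T -> f \notin F ->
  in_span
    (fun F' : {set edge n} => [/\ F' \subset E, connected_on F' & weight F' < weight F]%N)
    (fun F' => Z_ K (E :\: F')) (Z_ K (E :\: F)).
Proof.
move=> oE FE cF TF sT fact fF.
have oF := oriented_sub FE oE.
have [c [x0 [/andP[Sc /andP[_ Uc]] x0c gx0 cT lex_c]]] := active_edge_cycle oE sT fact.
have [fE _ _] := (in_actP _ _ _).1 fact.
have fH : cycle_edge c x0 \in E :\: F by rewrite gx0 !inE fF fE.
rewrite (Z_cycle_exchange K Uc x0c fH).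
apply: in_span_sum => x xc xx0; apply: in_spanZ.
set g := cycle_edge c x.
have gT : g \in T by apply: cT.
have gF : g \in F by apply: (subsetP TF).
have gf : g != f.
  by apply: contra xx0 => /eqP; rewrite -gx0 => /(cycle_edge_inj Uc Sc xc x0c) ->.
pose F' := f |: (F :\ g).
have -> : z_e K g * Z_ K ((E :\: F) :\ cycle_edge c x0) = Z_ K (E :\: F').
  rewrite gx0 /Z_ -big_setU1 /=; last by rewrite !inE gF andbF.
  apply: eq_bigl => q; rewrite /F' !inE.
  have [->|qg] := eqVneq q g; first by rewrite (negbTE gf) (subsetP FE).
  by have [->|] := eqVneq q f.
apply: in_span_gen; split.
- by apply/subsetP => q; rewrite !inE => /orP[/eqP ->|/andP[_ /(subsetP FE)]].
- apply: (connected_exchange oF cF Uc xc).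
    move=> y yc yx; rewrite /F' !inE.
    have [yx0|yx0] := eqVneq y x0; first by rewrite yx0 gx0 eqxx.
    rewrite (subsetP TF _ (cT _ yc yx0)) andbT orbC; apply/orP; left.
    by apply: contra yx => /eqP/(cycle_edge_inj Uc Sc yc xc) ->.
  by move=> e eF eg; rewrite /F' !inE eg eF orbT.
- have lt_fg : (edge_weight f < edge_weight g)%N.
    by apply: lex_lt_weight; [apply: lex_c | rewrite eq_sym].
  rewrite /F' weightU1; last by rewrite !inE (negbTE fF) andbF.
  by rewrite (weightD1 gF) ltn_add2r.
Qed.

Lemma Z_compl_in_tree_span (K : fieldType) n (E F : {set edge n}) :
  oriented E -> F \subset E -> connected_on F ->
  in_span (spanning_tree E) (fun T => Z_ K (E :\: T_act E T)) (Z_ K (E :\: F)).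
Proof.
move=> oE; have [k] := ubnP (weight F); elim: k F => // k IHk F ltFk FE cF.
have [T [TF sT FT]] := exists_spanning_tree_T_act oE FE cF.
have [<-|neF] := eqVneq (T_act E T) F; first exact: in_span_gen.
have [f fT fF] : exists2 f, f \in T_act E T & f \notin F.
  by apply/subsetPn; apply: contra neF => TF'; rewrite eqEsubset TF' FT.
have fact : f \in act E T.
  by move: fT; rewrite /T_act inE => /orP[/(subsetP TF)|//]; rewrite (negbTE fF).
apply: in_span_trans (Z_compl_exchange K oE FE cF TF sT fact fF).
move=> F' [F'E cF' ltF']; apply: IHk => //.
exact: leq_trans ltF' _.
Qed.

Unset Implicit Arguments.

Theorem mainTheorem3 (K : fieldType) (K0 : [pchar K] =i pred0)
  (n m : nat) (t : 'I_n -> 'I_m) (t_surj : forall k : 'I_m, exists i, t i = k) :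
  let E := tiered_edges t in
  (forall T : {set edge n}, spanning_tree E T ->
     in_span (slim E) (@Z_ K n) (Z_ K (E :\: T_act E T))) /\
  (forall H : {set edge n}, slim E H ->
     in_span (spanning_tree E) (fun T => Z_ K (E :\: T_act E T)) (Z_ K H)).
Proof.
move=> E; have oE : oriented E by move=> p; rewrite inE => /andP[].
split=> [T [TE [cT _]]|H [HE cH]].
  apply: in_span_gen; split; first exact: subsetDl.
  apply: (connected_on_sub cT) => u v /(adj_subset _) uv; apply/connect1/uv.
  by rewrite setDDr setDv set0U subsetI TE subsetUl.
have -> : H = E :\: (E :\: H) by rewrite setDDr setDv set0U (setIidPr HE).
exact: Z_compl_in_tree_span (subsetDl _ _) cH.
Qed.
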